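(* Let $n\ge 1$ and let $\Pi_n=\{(u_1,\ldots,u_n)\in\mathbf{R}^n: u_i>0,\ u_i+u_{i+1}<\pi/2\ (1\le i\le n)\}$, with $u_{n+1}:=u_1$. The transformation $x_i=\frac{\sin u_i}{\cos u_{i+1}}$ ($1\le i\le n$, with $u_{n+1}:=u_1$) maps $\Pi_n$ bijectively onto the open unit cube $(0,1)^n$. *)

From HB Require Import structures.
From mathcomp Require Import all_boot all_order all_algebra.
From mathcomp Require Import all_classical all_reals all_analysis.
Set Implicit Arguments. Unset Strict Implicit. Unset Printing Implicit Defensive.
Import Order.TTheory GRing.Theory Num.Theory.
Local Open Scope classical_set_scope.
Local Open Scope ring_scope.

(* cyclic successor index: u_{n+1} := u_1 *)
Definition succ_idx (n : nat) (i : 'I_n) : 'I_n := ordS i.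

Definition Pi_set (R : realType) (n : nat) : set ('I_n -> R) :=
  [set u | forall i : 'I_n, 0 < u i /\ u i + u (succ_idx i) < pi / 2].

Definition open_cube (R : realType) (n : nat) : set ('I_n -> R) :=
  [set x | forall i : 'I_n, 0 < x i /\ x i < 1].

Definition transfo (R : realType) (n : nat) (u : 'I_n -> R) : 'I_n -> R :=
  fun i => sin (u i) / cos (u (succ_idx i)).

From mathcomp Require Import all_boot all_order all_algebra.
From mathcomp Require Import all_classical all_reals all_analysis.
From mathcomp Require Import ring lra.
Set Implicit Arguments.
Unset Strict Implicit.
Unset Printing Implicit Defensive.

(* Put s_i = sin^2 u_i.  Since cos^2 = 1 - sin^2, the equations
   x_i = sin u_i / cos u_(i+1) become the cyclic affine system
   s_i = x_i^2 (1 - s_(i+1)), whose coefficients x_i^2 lie in (0,1).  By a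
   maximum principle such a system has at most one solution, hence exactly one
   (it is a square linear system), and that solution lies in (0,1)^n; then
   u_i = asin (sqrt s_i) inverts the transformation.  The constraint
   u_i + u_(i+1) < pi/2 is equivalent to sin u_i < cos u_(i+1), i.e. x_i < 1. *)

Import Order.TTheory GRing.Theory Num.Theory.
Local Open Scope ring_scope.

Section AffineFixpoint.
Variables (R : realFieldType) (T : finType) (sigma : T -> T).

Lemma max_principle (w f : T -> R) (c : R) :
  (forall j, 0 <= w j < 1) ->
  (forall j, f j <= w j * f (sigma j) + (1 - w j) * c) ->
  forall j, f j <= c.
Proof.
move=> w01 hf j.
have [m _ f_max] := @arg_maxP _ _ _ j xpredT f erefl.
apply: le_trans (f_max j isT) _.
have fsm : f (sigma m) <= f m := f_max _ isT.
have /andP[w0 w1] := w01 m; have := hf m; nra.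
Qed.

Lemma affine_fixpoint_uniq (a b s t : T -> R) :
  (forall j, `|a j| < 1) ->
  (forall j, s j = a j * s (sigma j) + b j) ->
  (forall j, t j = a j * t (sigma j) + b j) -> s = t.
Proof.
move=> a1 hs ht; apply/funext => j; apply/eqP; rewrite -subr_eq0 -normr_le0.
apply: (@max_principle (fun j => `|a j|) (fun j => `|s j - t j|)) => // k.
  by rewrite normr_ge0 a1.
by rewrite mulr0 addr0 hs ht opprD addrACA subrr addr0 -mulrBr normrM.
Qed.

Lemma affine_fixpoint_in01 (a s : T -> R) :
  (forall j, 0 < a j < 1) ->
  (forall j, s j = a j * (1 - s (sigma j))) -> forall j, 0 < s j < 1.
Proof.
move=> a01 hs.
have s_dist : forall j, `|2 * s j - 1| <= 1.
  apply: (@max_principle a (fun j => `|2 * s j - 1|)) => [j|j].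
    by have /andP[a0 a1] := a01 j; rewrite ltW.
  have /andP[a0 a1] := a01 j.
  have a1' : 0 <= 1 - a j by rewrite subr_ge0 ltW.
  have -> : 2 * s j - 1 = - (a j * (2 * s (sigma j) - 1)) - (1 - a j).
    by rewrite hs; ring.
  apply: le_trans (ler_normB _ _) _.
  by rewrite normrN normrM gtr0_norm // mulr1 (ger0_norm a1').
have s_le1 : forall j, s j < 1.
  move=> j; have /andP[a0 a1] := a01 j.
  have := s_dist (sigma j); rewrite ler_norml => /andP[h _].
  rewrite hs; nra.
move=> j; rewrite s_le1 andbT hs.
have /andP[a0 _] := a01 j; have := s_le1 (sigma j); nra.
Qed.

End AffineFixpoint.

Lemma affine_fixpoint_exists (R : realFieldType) (n : nat)
    (sigma : 'I_n -> 'I_n) (a b : 'I_n -> R) :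
  (forall j, `|a j| < 1) ->
  exists s : 'I_n -> R, forall j, s j = a j * s (sigma j) + b j.
Proof.
move=> a1.
pose A : 'M[R]_n := 1%:M - \matrix_(k, j) (if k == sigma j then a j else 0).
have mulA (v : 'rV[R]_n) j : (v *m A) 0 j = v 0 j - a j * v 0 (sigma j).
  rewrite mulmxBr mulmx1 !mxE (bigD1 (sigma j)) //= mxE eqxx big1 ?addr0.
    by rewrite mulrC.
  by move=> k /negbTE sk; rewrite mxE sk mulr0.
have A_unit : A \in unitmx.
  rewrite unitmxE unitfE; apply/det0P => -[v /eqP v_neq0 vA]; apply: v_neq0.
  have v0 : (fun j => v 0 j) = (fun=> 0).
    apply: (@affine_fixpoint_uniq _ _ sigma a (fun=> 0)) => // k.
      by apply/eqP; rewrite addr0 -subr_eq0 -mulA vA mxE.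
    by rewrite mulr0 addr0.
  by apply/rowP => j; rewrite mxE (congr1 (@^~ j) v0).
pose s := \row_j b j *m invmx A.
exists (fun j => s 0 j) => j.
by have := mulA s j; rewrite mulmxKV // mxE => ->; rewrite addrC subrK.
Qed.

Section Trigonometry.
Variable R : realType.

Lemma pihalf_gt0 : 0 < pi / 2 :> R.
Proof. by rewrite divr_gt0 ?pi_gt0. Qed.

Lemma sin_lt_cos (u v : R) : 0 <= u <= pi / 2 -> 0 <= v <= pi / 2 ->
  (sin u < cos v) = (u + v < pi / 2).
Proof.
move=> /andP[u0 u1] /andP[v0 v1]; have pi2 := pihalf_gt0.
rewrite -[cos v]opprK -sinBpihalf -sinN opprB -ltrBrDr ltr_sin // !in_itv /=.
  by apply/andP; split; lra.
by apply/andP; split; lra.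
Qed.

Lemma asin_in_pihalf (r : R) : 0 < r < 1 -> 0 < asin r < pi / 2.
Proof.
move=> /andP[r0 r1]; have r_itv : -1 <= r <= 1 by apply/andP; split; lra.
rewrite asin_ltpi2 ?andbT; last by apply/andP; split; lra.
have pi2 := pihalf_gt0.
have asin_itv : asin r \in `[- (pi / 2), pi / 2].
  by rewrite in_itv /= asin_geNpi2 ?asin_lepi2.
have zero_itv : 0 \in `[- (pi / 2), pi / 2 :> R].
  by rewrite in_itv /=; apply/andP; split; lra.
by rewrite -(ltr_sin zero_itv asin_itv) sin0 asinK // in_itv.
Qed.

Lemma sqr_sin_inj :
  {in `[0, pi / 2] &, injective (fun v : R => sin v ^+ 2)}.
Proof.
have pi2 := pihalf_gt0.
have sub_itv v : v \in `[0, pi / 2] -> v \in `[- (pi / 2), pi / 2].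
  by rewrite !in_itv /= => /andP[v0 v1]; apply/andP; split; lra.
have sin_ge0 v : v \in `[0, pi / 2] -> 0 <= sin v.
  rewrite in_itv /= => /andP[v0 v1].
  by apply: sin_ge0_pi; apply/andP; split; lra.
move=> v w v_itv w_itv /eqP; rewrite eqrXn2 ?sin_ge0 // => /eqP.
by apply: sin_inj; apply: sub_itv.
Qed.

End Trigonometry.

Section Transformation.
Variables (R : realType) (n : nat).
Implicit Types (u x s : 'I_n -> R).

Lemma Pi_set_in_pihalf u : Pi_set u -> forall j, 0 < u j < pi / 2.
Proof.
move=> uPi j; have [uj0 uj1] := uPi j; have [usj0 _] := uPi (succ_idx j).
by rewrite uj0 /=; lra.
Qed.

Lemma cos_Pi_set_gt0 u : Pi_set u -> forall j, 0 < cos (u j).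
Proof.
move=> /Pi_set_in_pihalf uPi j; have /andP[uj0 uj1] := uPi j.
by apply: cos_gt0_pihalf; apply/andP; split; lra.
Qed.

Lemma transfo_fun : set_fun (@Pi_set R n) (@open_cube R n) (@transfo R n).
Proof.
move=> u uPi j; have [_ ujs] := uPi j.
have /andP[uj0 uj1] := Pi_set_in_pihalf uPi j.
have /andP[usj0 usj1] := Pi_set_in_pihalf uPi (succ_idx j).
have cos_gt0 := cos_Pi_set_gt0 uPi (succ_idx j).
split; first by rewrite divr_gt0 // sin_gt0_pihalf ?uj0.
by rewrite ltr_pdivrMr // mul1r sin_lt_cos ?ltW ?uj0 ?usj0.
Qed.

Lemma sqr_sin_Pi_set u : Pi_set u -> forall j,
  sin (u j) ^+ 2 = transfo u j ^+ 2 * (1 - sin (u (succ_idx j)) ^+ 2).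
Proof.
move=> uPi j; have cos_gt0 := cos_Pi_set_gt0 uPi (succ_idx j).
by rewrite -cos2sin2 -exprMn /transfo divfK ?gt_eqF.
Qed.

Lemma transfo_inj : set_inj (@Pi_set R n) (@transfo R n).
Proof.
move=> u w; rewrite !inE => uPi wPi x_eq.
have x01 := transfo_fun uPi.
have sqr_sin_eq : (fun j => sin (u j) ^+ 2) = (fun j => sin (w j) ^+ 2).
  apply: (@affine_fixpoint_uniq _ _ (@succ_idx n)
    (fun j => - transfo u j ^+ 2) (fun j => transfo u j ^+ 2)) => j.
  - have [xj0 xj1] := x01 j.
    by rewrite normrN ger0_norm ?sqr_ge0 // expr_lt1 ?ltW.
  - by rewrite sqr_sin_Pi_set //; ring.
  - by rewrite x_eq sqr_sin_Pi_set //; ring.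
apply/funext => j; apply: sqr_sin_inj.
- by have /andP[uj0 uj1] := Pi_set_in_pihalf uPi j; rewrite in_itv /= !ltW.
- by have /andP[wj0 wj1] := Pi_set_in_pihalf wPi j; rewrite in_itv /= !ltW.
- by move/(congr1 (@^~ j)): sqr_sin_eq.
Qed.

Section AsinSqrt.
Variables x s : 'I_n -> R.
Hypotheses (x01 : open_cube x) (s01 : forall j, 0 < s j < 1).
Hypothesis s_eq : forall j, s j = x j ^+ 2 * (1 - s (succ_idx j)).

Let u j := asin (Num.sqrt (s j)).

Let sqrt_s01 j : 0 < Num.sqrt (s j) < 1.
Proof.
have /andP[sj0 sj1] := s01 j.
by rewrite sqrtr_gt0 sj0 -sqrtr1 ltr_sqrt.
Qed.

Let sqrt_s_itv j : -1 <= Num.sqrt (s j) <= 1.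
Proof. by have /andP[r0 r1] := sqrt_s01 j; apply/andP; split; lra. Qed.

Let sin_u j : sin (u j) = Num.sqrt (s j).
Proof. by rewrite /u asinK // in_itv /= sqrt_s_itv. Qed.

Let cos_u j : cos (u j) = Num.sqrt (1 - s j).
Proof.
have /andP[sj0 _] := s01 j.
by rewrite /u cos_asin // sqr_sqrtr // ltW.
Qed.

Let sqrt_s_eq j : Num.sqrt (s j) = x j * Num.sqrt (1 - s (succ_idx j)).
Proof.
have [xj0 _] := x01 j.
by rewrite {1}s_eq sqrtrM ?sqr_ge0 // sqrtr_sqr gtr0_norm.
Qed.

Lemma Pi_set_asin_sqrt : Pi_set u.
Proof.
move=> j; have /andP[uj0 uj1] := asin_in_pihalf (sqrt_s01 j).
have /andP[usj0 usj1] := asin_in_pihalf (sqrt_s01 (succ_idx j)).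
split => //; rewrite -sin_lt_cos ?ltW ?uj0 ?usj0 // sin_u cos_u sqrt_s_eq.
have [_ xj1] := x01 j; have /andP[_ ssj1] := s01 (succ_idx j).
by rewrite gtr_pMl // sqrtr_gt0 subr_gt0.
Qed.

Lemma transfo_asin_sqrt : transfo u = x.
Proof.
apply/funext => j; have /andP[_ ssj1] := s01 (succ_idx j).
by rewrite /transfo sin_u cos_u sqrt_s_eq mulfK // gt_eqF // sqrtr_gt0 subr_gt0.
Qed.

End AsinSqrt.

Lemma transfo_surj : set_surj (@Pi_set R n) (@open_cube R n) (@transfo R n).
Proof.
move=> x x01.
have sqr_x01 j : 0 < x j ^+ 2 < 1.
  by have [xj0 xj1] := x01 j; rewrite exprn_gt0 // expr_lt1 ?ltW.
have contracting j : `|- x j ^+ 2| < 1.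
  by have /andP[xj0 xj1] := sqr_x01 j; rewrite normrN gtr0_norm.
have [s s_affine] :=
  affine_fixpoint_exists (@succ_idx n) (fun j => x j ^+ 2) contracting.
have s_eq j : s j = x j ^+ 2 * (1 - s (succ_idx j)).
  by rewrite s_affine; ring.
have s01 := affine_fixpoint_in01 sqr_x01 s_eq.
exists (fun j => asin (Num.sqrt (s j))).
  exact: Pi_set_asin_sqrt.
exact: transfo_asin_sqrt.
Qed.

End Transformation.

Theorem lemma2 (R : realType) (n : nat) (hn : (1 <= n)%N) :
  set_bij (@Pi_set R n) (@open_cube R n) (@transfo R n).
Proof.
by split; [exact: transfo_fun | exact: transfo_inj | exact: transfo_surj].
Qed.
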